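(* Let $S^2_{\geq 0}=\{(x,y,z):x^2+y^2+z^2=1,\ z\geq 0\}$ and let $O=(0,0,0)$. If $A,B,C,D$ are four points on $S^2_{\geq 0}$ such that the sum $AB+AC+AD+BC+BD+CD$ of their pairwise Euclidean distances is maximal (among all quadruples of points of $S^2_{\geq 0}$), then $O$ is contained in the interior of the convex hull of $A,B,C,D$ or lies on one of its faces (surfaces). *)

From Stdlib Require Import Reals.
Open Scope R_scope.

Record pt3 : Type := Pt { px : R; py : R; pz : R }.

Definition upper_hemisphere (p : pt3) : Prop :=
  px p ^ 2 + py p ^ 2 + pz p ^ 2 = 1 /\ 0 <= pz p.

Definition dist3 (p q : pt3) : R :=
  sqrt ((px p - px q) ^ 2 + (py p - py q) ^ 2 + (pz p - pz q) ^ 2).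

Definition sum_dist4 (A B C D : pt3) : R :=
  dist3 A B + dist3 A C + dist3 A D + dist3 B C + dist3 B D + dist3 C D.

Definition in_convex_hull4 (P A B C D : pt3) : Prop :=
  exists a b c d : R,
    0 <= a /\ 0 <= b /\ 0 <= c /\ 0 <= d /\ a + b + c + d = 1 /\
    px P = a * px A + b * px B + c * px C + d * px D /\
    py P = a * py A + b * py B + c * py C + d * py D /\
    pz P = a * pz A + b * pz B + c * pz C + d * pz D.

Definition origin3 : pt3 := Pt 0 0 0.

(* If O is not in the convex hull of A, B, C, D, Gordan's alternative gives a
   vector u with u.P > 0 for each of the four points P.  Write the horizontal
   part of u as h b with b a horizontal unit vector and h >= 0, and project to
   the vertical plane spanned by b and e_z: the projected points lie in the
   open half-plane h x + u_z z > 0, on which the angle is a total order.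
   Rotating the point P of largest angle a little further in that plane keeps
   it on the upper hemisphere (on the equator its b-component is positive, so
   it moves up) and strictly decreases its scalar product with every other
   point, i.e. strictly increases its distance to the three others. *)

From Stdlib Require Import Reals Lra Lia Psatz.
Open Scope R_scope.

Definition dot (p q : pt3) : R := px p * px q + py p * py q + pz p * pz q.

Definition lin3 (a : R) (p : pt3) (b : R) (q : pt3) : pt3 :=
  Pt (a * px p + b * px q) (a * py p + b * py q) (a * pz p + b * pz q).

Lemma dot_lin3l a p b q r : dot (lin3 a p b q) r = a * dot p r + b * dot q r.
Proof. unfold dot, lin3; simpl; ring. Qed.

Lemma dot_lin3r r a p b q : dot r (lin3 a p b q) = a * dot r p + b * dot r q.
Proof. unfold dot, lin3; simpl; ring. Qed.

Lemma dot_self_eq0 p : dot p p = 0 -> forall w, dot w p = 0.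
Proof.
  unfold dot; intros Hp w.
  assert (px p = 0) by nra; assert (py p = 0) by nra; assert (pz p = 0) by nra.
  nra.
Qed.

Definition near_0p (P : R -> Prop) : Prop :=
  exists e, 0 < e /\ forall t, 0 < t <= e -> P t.

Lemma near_0p_impl (P Q : R -> Prop) :
  (forall t, 0 < t -> P t -> Q t) -> near_0p P -> near_0p Q.
Proof.
  intros HPQ [e [He HP]]; exists e; split; [exact He|].
  intros t Ht; apply HPQ; [lra | auto].
Qed.

Lemma near_0p_and (P Q : R -> Prop) :
  near_0p P -> near_0p Q -> near_0p (fun t => P t /\ Q t).
Proof.
  intros [e1 [He1 HP]] [e2 [He2 HQ]].
  exists (Rmin e1 e2); split; [now apply Rmin_pos|].
  pose proof (Rmin_l e1 e2); pose proof (Rmin_r e1 e2).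
  intros t Ht; split; [apply HP | apply HQ]; lra.
Qed.

Lemma near_0p_forall_lt (P : nat -> R -> Prop) (m : nat) :
  (forall i, (i < m)%nat -> near_0p (P i)) ->
  near_0p (fun t => forall i, (i < m)%nat -> P i t).
Proof.
  induction m as [|m IH]; intros HP.
  - exists 1; split; [lra|]; intros t _ i Hi; lia.
  - apply (near_0p_impl (fun t => (forall i, (i < m)%nat -> P i t) /\ P m t)).
    + intros t _ [Hlt Hm] i Hi.
      destruct (Nat.lt_ge_cases i m); [auto | now replace i with m by lia].
    + apply near_0p_and; [apply IH; intros; apply HP|apply HP]; lia.
Qed.

Lemma near_0p_ex (P : R -> Prop) : near_0p P -> exists t, 0 < t /\ P t.
Proof. intros [e [He HP]]; exists e; split; [exact He | apply HP; lra]. Qed.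

Lemma near_0p_le e : 0 < e -> near_0p (fun t => t <= e).
Proof. intros He; exists e; split; [exact He | intros t Ht; lra]. Qed.

Lemma near_0p_affine_pos a c :
  0 <= a -> (a = 0 -> 0 < c) -> near_0p (fun t => 0 < a + t * c).
Proof.
  intros Ha Hc; destruct (Req_dec a 0) as [Ha0|Ha0].
  - specialize (Hc Ha0); exists 1; split; [lra|]; intros t Ht; nra.
  - assert (Hk : 0 < Rabs c + 1) by (pose proof (Rabs_pos c); lra).
    exists (a / (Rabs c + 1)); split; [apply Rdiv_lt_0_compat; lra|].
    intros t [Ht Hte].
    assert (t * (Rabs c + 1) <= a).
    { replace a with (a / (Rabs c + 1) * (Rabs c + 1)) by (field; lra).
      apply Rmult_le_compat_r; lra. }
    pose proof (Rle_abs (- c)) as Hc'; rewrite Rabs_Ropp in Hc'; nra.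
Qed.

(** * Gordan's alternative *)

Fixpoint rsum (m : nat) (f : nat -> R) : R :=
  match m with O => 0 | S k => rsum k f + f k end.

Lemma rsum_ext m f g : (forall i, (i < m)%nat -> f i = g i) -> rsum m f = rsum m g.
Proof.
  induction m as [|m IH]; simpl; intros Hfg; [reflexivity|].
  rewrite IH, Hfg; [reflexivity | lia | intros; apply Hfg; lia].
Qed.

Lemma rsum_plus m f g : rsum m (fun i => f i + g i) = rsum m f + rsum m g.
Proof. induction m as [|m IH]; simpl; [ring | rewrite IH; ring]. Qed.

Lemma rsum_scal m c f : rsum m (fun i => c * f i) = c * rsum m f.
Proof. induction m as [|m IH]; simpl; [ring | rewrite IH; ring]. Qed.

Lemma rsum_nonneg m f : (forall i, (i < m)%nat -> 0 <= f i) -> 0 <= rsum m f.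
Proof.
  induction m as [|m IH]; simpl; intros Hf; [lra|].
  assert (0 <= rsum m f) by (apply IH; intros; apply Hf; lia).
  assert (0 <= f m) by (apply Hf; lia).
  lra.
Qed.

Lemma rsum_pos_mul m l a :
  (forall i, (i < m)%nat -> 0 <= l i) -> (forall i, (i < m)%nat -> 0 < a i) ->
  0 < rsum m l -> 0 < rsum m (fun i => l i * a i).
Proof.
  induction m as [|m IH]; simpl; intros Hl Ha Hs; [lra|].
  assert (0 <= l m) by (apply Hl; lia).
  assert (0 < a m) by (apply Ha; lia).
  assert (Hl' : forall i, (i < m)%nat -> 0 <= l i) by (intros; apply Hl; lia).
  assert (Ha' : forall i, (i < m)%nat -> 0 < a i) by (intros; apply Ha; lia).
  destruct (Rlt_or_le 0 (rsum m l)) as [Hpos|Hzero].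
  - pose proof (IH Hl' Ha' Hpos); nra.
  - pose proof (rsum_nonneg m l Hl').
    assert (0 <= rsum m (fun i => l i * a i)).
    { apply rsum_nonneg; intros i Hi.
      pose proof (Hl' i Hi); pose proof (Ha' i Hi); nra. }
    nra.
Qed.

Definition snoc (m : nat) (l : nat -> R) (c : R) (i : nat) : R :=
  if (i <? m)%nat then l i else c.

Lemma snoc_nonneg m l c :
  (forall i, (i < m)%nat -> 0 <= l i) -> 0 <= c ->
  forall i, (i < S m)%nat -> 0 <= snoc m l c i.
Proof. intros Hl Hc i Hi; unfold snoc; destruct (Nat.ltb_spec i m); auto. Qed.

Lemma rsum_snoc_mul m l c g :
  rsum (S m) (fun i => snoc m l c i * g i) = rsum m (fun i => l i * g i) + c * g m.
Proof.
  simpl; unfold snoc at 2; rewrite Nat.ltb_irrefl; f_equal.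
  apply rsum_ext; intros i Hi; unfold snoc.
  now rewrite (proj2 (Nat.ltb_lt i m) Hi).
Qed.

Lemma rsum_snoc m l c : rsum (S m) (snoc m l c) = rsum m l + c.
Proof.
  transitivity (rsum (S m) (fun i => snoc m l c i * 1)).
  - apply rsum_ext; intros; ring.
  - rewrite rsum_snoc_mul, Rmult_1_r; f_equal; apply rsum_ext; intros; ring.
Qed.

Definition separable (m : nat) (v : nat -> pt3) : Prop :=
  exists u, forall i, (i < m)%nat -> 0 < dot u (v i).

(* [sum_i l i * v i = 0], tested against every [w]. *)
Definition nonneg_dependent (m : nat) (v : nat -> pt3) : Prop :=
  exists l, (forall i, (i < m)%nat -> 0 <= l i) /\ 0 < rsum m l /\
    forall w, rsum m (fun i => l i * dot w (v i)) = 0.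

Lemma nonneg_dependent_snoc m v : nonneg_dependent m v -> nonneg_dependent (S m) v.
Proof.
  intros (l & Hl & Hs & Hw); exists (snoc m l 0); split; [|split].
  - apply snoc_nonneg; [exact Hl | lra].
  - rewrite rsum_snoc; lra.
  - intros w; rewrite rsum_snoc_mul, Hw; ring.
Qed.

Lemma nonneg_dependent_null m v : dot (v m) (v m) = 0 -> nonneg_dependent (S m) v.
Proof.
  intros Hnull; exists (snoc m (fun _ => 0) 1); split; [|split].
  - apply snoc_nonneg; intros; lra.
  - rewrite rsum_snoc.
    assert (0 <= rsum m (fun _ => 0)) by (apply rsum_nonneg; intros; lra).
    lra.
  - intros w; rewrite rsum_snoc_mul, (dot_self_eq0 _ Hnull w).
    rewrite rsum_scal; ring.
Qed.

Lemma separable_snoc_of_orthogonal m v b :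
  (forall i, (i < m)%nat -> 0 < dot b (v i)) -> dot b (v m) = 0 ->
  0 < dot (v m) (v m) -> separable (S m) v.
Proof.
  intros Hb Hbm Hm.
  assert (Hnear : near_0p (fun t => forall i, (i < m)%nat ->
                                     0 < dot b (v i) + t * dot (v m) (v i))).
  { apply near_0p_forall_lt; intros i Hi; pose proof (Hb i Hi).
    apply near_0p_affine_pos; lra. }
  destruct (near_0p_ex _ Hnear) as (e & He & Hpos).
  exists (lin3 1 b e (v m)); intros i Hi; rewrite dot_lin3l.
  destruct (Nat.lt_ge_cases i m).
  - specialize (Hpos i ltac:(assumption)); lra.
  - replace i with m by lia; rewrite Hbm; nra.
Qed.

(* [proj_along u m v i] is orthogonal to [u]: it is [v i] pushed along [v m]
   into the plane [u^perp], scaled by [- u.(v m)]. *)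
Definition proj_along (u : pt3) (m : nat) (v : nat -> pt3) (i : nat) : pt3 :=
  lin3 (dot u (v i)) (v m) (- dot u (v m)) (v i).

Lemma separable_of_proj_along m v u :
  0 < dot (v m) (v m) -> separable m (proj_along u m v) -> separable (S m) v.
Proof.
  intros Hm [w Hw].
  apply (separable_snoc_of_orthogonal m v (lin3 (dot w (v m)) u (- dot u (v m)) w)).
  - intros i Hi; specialize (Hw i Hi); unfold proj_along in Hw.
    rewrite dot_lin3r in Hw; rewrite dot_lin3l; lra.
  - rewrite dot_lin3l; ring.
  - exact Hm.
Qed.

Lemma nonneg_dependent_of_proj_along m v u :
  (forall i, (i < m)%nat -> 0 < dot u (v i)) -> dot u (v m) <= 0 ->
  nonneg_dependent m (proj_along u m v) -> nonneg_dependent (S m) v.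
Proof.
  intros Hu Ha (mu & Hmu & Hs & Hw).
  set (a := dot u (v m)) in *.
  set (s := rsum m (fun i => mu i * dot u (v i))).
  assert (Hspos : 0 < s) by (apply rsum_pos_mul; assumption).
  exists (snoc m (fun i => - a * mu i) s); split; [|split].
  - apply snoc_nonneg; [intros i Hi; specialize (Hmu i Hi); nra | lra].
  - rewrite rsum_snoc, rsum_scal; pose proof (rsum_nonneg m mu Hmu); nra.
  - intros w; specialize (Hw w); rewrite rsum_snoc_mul.
    rewrite (rsum_ext m _ (fun i => dot w (v m) * (mu i * dot u (v i))
                                   + - a * (mu i * dot w (v i)))) in Hw
      by (intros; unfold proj_along; rewrite dot_lin3r; fold a; ring).
    rewrite (rsum_ext m _ (fun i => - a * (mu i * dot w (v i)))) by (intros; ring).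
    rewrite rsum_plus, !rsum_scal in Hw; rewrite rsum_scal; fold s in Hw; lra.
Qed.

Theorem gordan m v : separable m v \/ nonneg_dependent m v.
Proof.
  revert v; induction m as [|m IH]; intros v.
  - left; exists origin3; intros i Hi; lia.
  - destruct (IH v) as [[u Hu] | Hdep]; [| right; now apply nonneg_dependent_snoc].
    destruct (Req_dec (dot (v m) (v m)) 0) as [Hnull | Hm].
    { right; now apply nonneg_dependent_null. }
    assert (Hm' : 0 < dot (v m) (v m)) by (unfold dot in *; nra).
    destruct (Rlt_or_le 0 (dot u (v m))) as [Hpos | Hneg].
    + left; exists u; intros i Hi.
      destruct (Nat.lt_ge_cases i m); [auto | now replace i with m by lia].
    + destruct (IH (proj_along u m v)) as [Hsep | Hdep].
      * left; exact (separable_of_proj_along m v u Hm' Hsep).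
      * right; exact (nonneg_dependent_of_proj_along m v u Hu Hneg Hdep).
Qed.

Definition quad (A B C D : pt3) (i : nat) : pt3 :=
  match i with 0 => A | 1 => B | 2 => C | _ => D end%nat.

Lemma in_convex_hull4_of_nonneg_dependent A B C D :
  nonneg_dependent 4 (quad A B C D) -> in_convex_hull4 origin3 A B C D.
Proof.
  intros (l & Hl & Hs & Hw); simpl in Hs.
  set (s := 0 + l 0%nat + l 1%nat + l 2%nat + l 3%nat) in *.
  assert (Hcomb : forall w, 0 = l 0%nat / s * dot w A + l 1%nat / s * dot w B
                                + l 2%nat / s * dot w C + l 3%nat / s * dot w D).
  { intros w; rewrite <- (Rmult_0_l (/ s)), <- (Hw w); simpl; field; lra. }
  exists (l 0%nat / s), (l 1%nat / s), (l 2%nat / s), (l 3%nat / s).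
  repeat split; try (apply Rle_mult_inv_pos; [apply Hl; lia | exact Hs]).
  - unfold s in *; field; lra.
  - rewrite (Hcomb (Pt 1 0 0)) at 1; unfold dot; simpl; ring.
  - rewrite (Hcomb (Pt 0 1 0)) at 1; unfold dot; simpl; ring.
  - rewrite (Hcomb (Pt 0 0 1)) at 1; unfold dot; simpl; ring.
Qed.

(** * Rotating one point in a vertical plane *)

Lemma dist3_sym p q : dist3 p q = dist3 q p.
Proof. unfold dist3; f_equal; ring. Qed.

Lemma sqr_dist3_sphere p q : upper_hemisphere p -> upper_hemisphere q ->
  (px p - px q) ^ 2 + (py p - py q) ^ 2 + (pz p - pz q) ^ 2 = 2 - 2 * dot p q.
Proof. intros [Hp _] [Hq _]; unfold dot; nra. Qed.

Lemma dist3_lt_of_dot_gt p p' q :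
  upper_hemisphere p -> upper_hemisphere p' -> upper_hemisphere q ->
  dot p' q < dot p q -> dist3 p q < dist3 p' q.
Proof.
  intros Hp Hp' Hq Hdot; unfold dist3.
  rewrite !sqr_dist3_sphere by assumption.
  apply sqrt_lt_1_alt; split; [|lra].
  rewrite <- sqr_dist3_sphere by assumption.
  repeat apply Rplus_le_le_0_compat; apply pow2_ge_0.
Qed.

Lemma polar_form x y :
  exists b1 b2 h, b1 ^ 2 + b2 ^ 2 = 1 /\ 0 <= h /\ x = h * b1 /\ y = h * b2.
Proof.
  destruct (Req_dec (x ^ 2 + y ^ 2) 0) as [H0|H0].
  - exists 1, 0, 0; repeat split; nra.
  - set (h := sqrt (x ^ 2 + y ^ 2)).
    assert (Hh : 0 < h) by (apply sqrt_lt_R0; nra).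
    assert (Hh2 : h * h = x ^ 2 + y ^ 2) by (apply sqrt_sqrt; nra).
    exists (x / h), (y / h), h; repeat split; try lra; field_simplify; try lra.
    rewrite <- Hh2; field; lra.
Qed.

(* Coordinates of the orthogonal projection to the vertical plane spanned by
   [(b1, b2, 0)] and [e_z]. *)
Definition hcomp (b1 b2 : R) (p : pt3) : R := b1 * px p + b2 * py p.
Definition pdot (b1 b2 : R) (p q : pt3) : R := hcomp b1 b2 p * hcomp b1 b2 q + pz p * pz q.
Definition pcross (b1 b2 : R) (q p : pt3) : R := hcomp b1 b2 q * pz p - pz q * hcomp b1 b2 p.

Definition half_plane (b1 b2 h w : R) (p : pt3) : Prop := 0 < h * hcomp b1 b2 p + w * pz p.

(* Rotation of angle [2 atan t] in that vertical plane, rationally parametrised. *)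
Definition rot (b1 b2 t : R) (p : pt3) : pt3 :=
  let c := (1 - t ^ 2) / (1 + t ^ 2) in
  let s := 2 * t / (1 + t ^ 2) in
  let d := (c - 1) * hcomp b1 b2 p - s * pz p in
  Pt (px p + d * b1) (py p + d * b2) (c * pz p + s * hcomp b1 b2 p).

Section VerticalPlane.

Variables b1 b2 h w : R.

Lemma pcross_trans x y z :
  half_plane b1 b2 h w x -> half_plane b1 b2 h w y -> half_plane b1 b2 h w z ->
  0 <= pcross b1 b2 x y -> 0 <= pcross b1 b2 y z -> 0 <= pcross b1 b2 x z.
Proof.
  unfold half_plane, pcross; intros Hx Hy Hz Hxy Hyz.
  set (x1 := hcomp b1 b2 x) in *; set (y1 := hcomp b1 b2 y) in *;
    set (z1 := hcomp b1 b2 z) in *.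
  (* Grassmann-Plucker relation; the three [h _ + w _] factors are positive. *)
  assert (E : (x1 * pz y - pz x * y1) * (h * z1 + w * pz z)
              + (y1 * pz z - pz y * z1) * (h * x1 + w * pz x)
              = (x1 * pz z - pz x * z1) * (h * y1 + w * pz y)) by ring.
  destruct (Rlt_or_le (x1 * pz z - pz x * z1) 0); [nra | lra].
Qed.

Lemma pdot_pos_of_pcross_eq0 p q :
  half_plane b1 b2 h w p -> half_plane b1 b2 h w q -> pcross b1 b2 q p = 0 ->
  0 < pdot b1 b2 p q.
Proof.
  unfold half_plane, pcross, pdot; intros Hp Hq Hpq.
  set (p1 := hcomp b1 b2 p) in *; set (q1 := hcomp b1 b2 q) in *.
  assert (E : (h * q1 + w * pz q) * (p1 ^ 2 + pz p ^ 2)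
              - (p1 * q1 + pz p * pz q) * (h * p1 + w * pz p)
              = (p1 * pz q - pz p * q1) * (w * p1 - h * pz p)) by ring.
  assert (0 < p1 ^ 2 + pz p ^ 2).
  { destruct (Req_dec p1 0); destruct (Req_dec (pz p) 0); nra. }
  replace (p1 * pz q - pz p * q1) with 0 in E by lra.
  nra.
Qed.

Lemma dot_rot t p q :
  dot (rot b1 b2 t p) q
  = dot p q - 2 * t / (1 + t ^ 2) * (t * pdot b1 b2 p q + pcross b1 b2 q p).
Proof.
  assert (0 < 1 + t ^ 2) by nra.
  unfold rot, dot, pdot, pcross, hcomp; simpl; field; lra.
Qed.

Lemma pz_rot t p :
  pz (rot b1 b2 t p) = ((1 - t ^ 2) * pz p + 2 * t * hcomp b1 b2 p) / (1 + t ^ 2).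
Proof. assert (0 < 1 + t ^ 2) by nra; unfold rot; simpl; field; lra. Qed.

Hypothesis b_unit : b1 ^ 2 + b2 ^ 2 = 1.

Lemma sqr_norm_rot t p :
  px (rot b1 b2 t p) ^ 2 + py (rot b1 b2 t p) ^ 2 + pz (rot b1 b2 t p) ^ 2
  = px p ^ 2 + py p ^ 2 + pz p ^ 2.
Proof.
  assert (0 < 1 + t ^ 2) by nra.
  unfold rot; cbn [px py pz].
  set (c := (1 - t ^ 2) / (1 + t ^ 2)); set (s := 2 * t / (1 + t ^ 2)).
  set (p1 := hcomp b1 b2 p); set (d := (c - 1) * p1 - s * pz p).
  assert (Hcs : c ^ 2 + s ^ 2 = 1) by (unfold c, s; field; lra).
  assert (E : (px p + d * b1) ^ 2 + (py p + d * b2) ^ 2 + (c * pz p + s * p1) ^ 2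
              - (px p ^ 2 + py p ^ 2 + pz p ^ 2)
              = (b1 ^ 2 + b2 ^ 2 - 1) * d ^ 2 + (c ^ 2 + s ^ 2 - 1) * (p1 ^ 2 + pz p ^ 2))
    by (unfold d, p1, hcomp; ring).
  rewrite b_unit, Hcs in E; lra.
Qed.

Lemma near_0p_rot_hemisphere p :
  0 <= h -> upper_hemisphere p -> half_plane b1 b2 h w p ->
  near_0p (fun t => upper_hemisphere (rot b1 b2 t p)).
Proof.
  intros Hh [Hnorm Hz] Hp; set (p1 := hcomp b1 b2 p).
  apply (near_0p_impl (fun t => t <= 1 /\ 0 < pz p + t * (2 * p1 - pz p))).
  - intros t Ht [Ht1 Hpos]; split; [rewrite sqr_norm_rot; exact Hnorm|].
    rewrite pz_rot; fold p1; apply Rle_mult_inv_pos; [|nra].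
    (* [(1 - t^2) pz p >= (1 - t) pz p] for [t <= 1] makes the condition affine. *)
    assert (0 <= t * (1 - t) * pz p) by (apply Rmult_le_pos; nra).
    nra.
  - apply near_0p_and; [apply near_0p_le; lra|].
    apply near_0p_affine_pos; [exact Hz|].
    intros Hz0; unfold half_plane in Hp; fold p1 in Hp; rewrite Hz0 in Hp |- *; nra.
Qed.

Lemma near_0p_rot_dot_lt p q :
  half_plane b1 b2 h w p -> half_plane b1 b2 h w q -> 0 <= pcross b1 b2 q p ->
  near_0p (fun t => dot (rot b1 b2 t p) q < dot p q).
Proof.
  intros Hp Hq Hqp.
  apply (near_0p_impl (fun t => 0 < pcross b1 b2 q p + t * pdot b1 b2 p q)).
  - intros t Ht Hpos; rewrite dot_rot.
    assert (0 < 2 * t / (1 + t ^ 2)) by (apply Rdiv_lt_0_compat; nra).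
    nra.
  - apply near_0p_affine_pos; [exact Hqp|].
    intros; now apply pdot_pos_of_pcross_eq0.
Qed.

Lemma rot_away p m q :
  0 <= h -> upper_hemisphere p -> half_plane b1 b2 h w p ->
  (forall i, (i < m)%nat -> upper_hemisphere (q i) /\ half_plane b1 b2 h w (q i)
                            /\ 0 <= pcross b1 b2 (q i) p) ->
  exists p', upper_hemisphere p' /\ forall i, (i < m)%nat -> dist3 p (q i) < dist3 p' (q i).
Proof.
  intros Hh Hp Hph Hq.
  assert (Hnear : near_0p (fun t => upper_hemisphere (rot b1 b2 t p) /\
            forall i, (i < m)%nat -> dot (rot b1 b2 t p) (q i) < dot p (q i))).
  { apply near_0p_and; [now apply near_0p_rot_hemisphere|].
    apply near_0p_forall_lt; intros i Hi; destruct (Hq i Hi) as (_ & Hqh & Hqp).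
    now apply near_0p_rot_dot_lt. }
  destruct (near_0p_ex _ Hnear) as (t & _ & Hrot & Hdot).
  exists (rot b1 b2 t p); split; [exact Hrot|].
  intros i Hi; apply dist3_lt_of_dot_gt; auto; apply Hq, Hi.
Qed.

End VerticalPlane.

Lemma exists_dominating {T : Type} (Rel : T -> T -> Prop) (Dom : T -> Prop)
      (f : nat -> T) (m : nat) :
  (forall x y, Rel x y \/ Rel y x) ->
  (forall x y z, Dom x -> Dom y -> Dom z -> Rel x y -> Rel y z -> Rel x z) ->
  (forall i, (i < S m)%nat -> Dom (f i)) ->
  exists j, (j < S m)%nat /\ forall i, (i < S m)%nat -> Rel (f i) (f j).
Proof.
  intros Htot Htrans.
  assert (Hrefl : forall x, Rel x x) by (intros x; now destruct (Htot x x)).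
  induction m as [|m IH]; intros Hdom.
  - exists 0%nat; split; [lia|]; intros i Hi; replace i with 0%nat by lia; apply Hrefl.
  - destruct IH as (j & Hj & Hmax); [intros; apply Hdom; lia|].
    destruct (Htot (f j) (f (S m))) as [Hup | Hdown].
    + exists (S m); split; [lia|]; intros i Hi.
      destruct (Nat.eq_dec i (S m)) as [->|Hne]; [apply Hrefl|].
      apply (Htrans _ (f j)); try apply Hdom; try apply Hmax; auto; lia.
    + exists j; split; [lia|]; intros i Hi.
      destruct (Nat.eq_dec i (S m)) as [->|Hne]; [exact Hdown | apply Hmax; lia].
Qed.

Lemma sum_dist4_lt_of_farther A B C D p' j :
  upper_hemisphere A -> upper_hemisphere B -> upper_hemisphere C -> upper_hemisphere D ->
  upper_hemisphere p' -> (j < 4)%nat ->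
  (forall i, (i < 4)%nat -> dist3 (quad A B C D j) (quad A B C D i) < dist3 p' (quad A B C D i)) ->
  exists A' B' C' D',
    upper_hemisphere A' /\ upper_hemisphere B' /\ upper_hemisphere C' /\ upper_hemisphere D' /\
    sum_dist4 A B C D < sum_dist4 A' B' C' D'.
Proof.
  intros HA HB HC HD Hp' Hj Hfar.
  pose proof (Hfar 0%nat ltac:(lia)) as F0; pose proof (Hfar 1%nat ltac:(lia)) as F1;
    pose proof (Hfar 2%nat ltac:(lia)) as F2; pose proof (Hfar 3%nat ltac:(lia)) as F3.
  pose proof (dist3_sym A p'); pose proof (dist3_sym B p'); pose proof (dist3_sym C p').
  pose proof (dist3_sym A B); pose proof (dist3_sym A C); pose proof (dist3_sym A D).
  pose proof (dist3_sym B C); pose proof (dist3_sym B D); pose proof (dist3_sym C D).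
  destruct j as [|[|[|[|j]]]]; simpl in F0, F1, F2, F3;
    [exists p', B, C, D | exists A, p', C, D | exists A, B, p', D | exists A, B, C, p' | lia];
    do 4 (split; [assumption|]); unfold sum_dist4; lra.
Qed.

Theorem lemma1 (A B C D : pt3) :
  upper_hemisphere A -> upper_hemisphere B ->
  upper_hemisphere C -> upper_hemisphere D ->
  (forall A' B' C' D' : pt3,
      upper_hemisphere A' -> upper_hemisphere B' ->
      upper_hemisphere C' -> upper_hemisphere D' ->
      sum_dist4 A' B' C' D' <= sum_dist4 A B C D) ->
  in_convex_hull4 origin3 A B C D.
Proof.
  intros HA HB HC HD Hmax.
  set (v := quad A B C D).
  assert (Hv : forall i, (i < 4)%nat -> upper_hemisphere (v i))
    by (intros [|[|[|[|i]]]] Hi; simpl; auto; lia).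
  destruct (gordan 4 v) as [[u Hu] | Hdep];
    [exfalso | now apply in_convex_hull4_of_nonneg_dependent].
  destruct (polar_form (px u) (py u)) as (b1 & b2 & h & Hb & Hh & Hux & Huy).
  assert (Hhalf : forall i, (i < 4)%nat -> half_plane b1 b2 h (pz u) (v i)).
  { intros i Hi; specialize (Hu i Hi).
    unfold half_plane, hcomp, dot in *; rewrite Hux, Huy in Hu; lra. }
  assert (Htot : forall x y, 0 <= pcross b1 b2 x y \/ 0 <= pcross b1 b2 y x).
  { intros x y; destruct (Rle_or_lt 0 (pcross b1 b2 x y)); [left | right];
      unfold pcross in *; lra. }
  destruct (exists_dominating (fun q p => 0 <= pcross b1 b2 q p)
              (half_plane b1 b2 h (pz u)) v 3 Htot (pcross_trans b1 b2 h (pz u)) Hhalf)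
    as (j & Hj & Hdom).
  destruct (rot_away b1 b2 h (pz u) Hb (v j) 4 v Hh (Hv j Hj) (Hhalf j Hj))
    as (p' & Hp' & Hfar); [intros i Hi; auto|].
  destruct (sum_dist4_lt_of_farther A B C D p' j HA HB HC HD Hp' Hj Hfar)
    as (A' & B' & C' & D' & HA' & HB' & HC' & HD' & Hlt).
  pose proof (Hmax A' B' C' D' HA' HB' HC' HD'); lra.
Qed.
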